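(* Let $(P,A,\lambda)$ be a marked poset. Then all marked chain-order polytopes $\mathcal{CO}_{U_1,U_2}(\lambda)$, for $(U_1,U_2)$ ranging over the admissible decompositions of $(P,A,\lambda)$, are Ehrhart equivalent, i.e. they have the same Ehrhart polynomial; equivalently, for every admissible decomposition $(U_1,U_2)$ and every $n\in\mathbb{N}$, $|S_{U_1,U_2}(n\lambda)|=|S_{P\setminus A,\emptyset}(n\lambda)|$.
   Context: A marked poset is a triple $(P,A,\lambda)$ where $(P,\prec)$ is a finite poset, $A\subseteq P$ contains all minimal and all maximal elements of $P$, and $\lambda:A\to\mathbb{Z}_{\ge 0}$, $a\mapsto\lambda_a$. A decomposition of $(P,A,\lambda)$ is a pair $(U_1,U_2)$ of disjoint sets with $U_1\cup U_2=P\setminus A$; it is admissible if there are no $u_1\in U_1$, $u_2\in U_2$ with $u_1\prec u_2$. Put $A_1=A\cup U_1$. The marked chain-order polytope $\mathcal{CO}_{U_1,U_2}(\lambda)\subset\mathbb{R}^{P\setminus A}$ is the set of $(x_p)_{p\in P\setminus A}$ such that: (i) $x_p\le\lambda_a$ whenever $p\in U_1$, $a\in A$, $p\prec a$; (ii) $\lambda_b\le x_q$ whenever $q\in U_1$, $b\in A$, $b\prec q$; (iii) $x_p\le x_q$ whenever $p,q\in U_1$, $p\prec q$; (iv) $x_p\ge0$ for $p\in U_2$; (v) for every chain $b\prec p_n\prec\cdots\prec p_1\prec a$ with $n\ge1$, $a,b\in A_1$, $p_i\in U_2$: $x_{p_1}+\cdots+x_{p_n}\le\lambda_a-\lambda_b$,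 where $\lambda_q$ means $x_q$ for $q\in U_1$; (vi) for every chain $p_1\prec\cdots\prec p_s\prec q$ with $q\in U_1$, $p_i\in U_2$: $x_{p_1}+\cdots+x_{p_s}\le x_q$. Set $S_{U_1,U_2}(\lambda)=\mathcal{CO}_{U_1,U_2}(\lambda)\cap\mathbb{Z}_{\ge0}^{P\setminus A}$. These polytopes are lattice polytopes. $\mathcal{CO}_{P\setminus A,\emptyset}(\lambda)$ is the marked order polytope. *)

From HB Require Import structures.
From mathcomp Require Import all_boot all_order.
From mathcomp Require Import boolp classical_sets cardinality.
Set Implicit Arguments. Unset Strict Implicit. Unset Printing Implicit Defensive.
Import Order.TTheory.
Local Open Scope order_scope.

Section MarkedPoset.
Context {d : Order.disp_t} {P : finPOrderType d}.

Definition is_minimal (p : P) := forall q : P, ~ (q < p).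
Definition is_maximal (p : P) := forall q : P, ~ (p < q).

(* (P, A, lambda) is a marked poset: A contains all minimal and maximal
   elements.  lambda : P -> nat, only its values on A are used. *)
Definition marked (A : {set P}) :=
  (forall p, is_minimal p -> p \in A) /\ (forall p, is_maximal p -> p \in A).

Definition decomposition (A U1 U2 : {set P}) :=
  [disjoint U1 & U2] /\ U1 :|: U2 = ~: A.

Definition admissible (A U1 U2 : {set P}) :=
  decomposition A U1 U2 /\
  ~ (exists u1 u2, [/\ u1 \in U1, u2 \in U2 & u1 < u2]).

Definition coordP (A : {set P}) := {p : P | p \notin A}.

(* Value of a point x at an element of P: x_p for p \notin A,
   lambda_p for p \in A (this realises the convention
   "lambda_q means x_q for q in U1" in condition (v)). *)
Definition xval (A : {set P}) (lam : P -> nat)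
  (x : {ffun coordP A -> nat}) (p : P) : nat :=
  match @insub P (fun q => q \notin A) (coordP A) p with
  | Some q => x q
  | None => lam p
  end.

(* Lattice points S_{U1,U2}(lam) of the marked chain-order polytope:
   points of CO_{U1,U2}(lam) with nonnegative integer coordinates
   (condition (iv) x_p >= 0 is automatic for nat-valued points).
   Condition (v) x_{p1}+...+x_{pn} <= lam_a - lam_b is written
   sum + lam_b <= lam_a (equivalent over the integers). *)
Definition in_CO (A U1 U2 : {set P}) (lam : P -> nat)
  (x : {ffun coordP A -> nat}) : Prop :=
  let v := xval lam x in
  (forall p a, p \in U1 -> a \in A -> p < a -> (v p <= lam a)%N) /\
  (forall q b, q \in U1 -> b \in A -> b < q -> (lam b <= v q)%N) /\
  (forall p q, p \in U1 -> q \in U1 -> p < q -> (v p <= v q)%N) /\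
  (* (v) chains b < p_n < ... < p_1 < a, n >= 1, a, b in A1 = A u U1,
     p_i in U2; s = [:: p_n; ...; p_1] *)
  (forall (a b : P) (s : seq P), s != [::] ->
      a \in A :|: U1 -> b \in A :|: U1 ->
      all (fun p => p \in U2) s -> sorted (fun p q => p < q) s ->
      b < head b s -> last a s < a ->
      (\sum_(p <- s) v p + v b <= v a)%N) /\
  (forall (q : P) (s : seq P), q \in U1 ->
      all (fun p => p \in U2) s -> sorted (fun p q => p < q) s ->
      last q s < q \/ s = [::] ->
      (\sum_(p <- s) v p <= v q)%N).


End MarkedPoset.

Arguments in_CO {d P} A U1 U2 lam x.

Definition S_CO {d : Order.disp_t} {P : finPOrderType d}
  (A U1 U2 : {set P}) (lam : P -> nat) : set {ffun coordP A -> nat} :=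
  [set x | in_CO A U1 U2 lam x].
Arguments S_CO {d P} A U1 U2 lam _.

From HB Require Import structures.
From mathcomp Require Import all_boot all_order.
From mathcomp Require Import boolp classical_sets cardinality.
From mathcomp Require Import zify.
Import Order.TTheory.
Set Implicit Arguments. Unset Strict Implicit. Unset Printing Implicit Defensive.

(* Stanley's transfer map, taken relative to U2.  A lattice point x of the
   marked order polytope is monotone, so replacing x_p for p in U2 by the jump
   x_p - max_{r < p} x_r keeps it nonnegative, and along a chain of U2 these
   jumps telescope, which yields the chain inequalities (v) and (vi).  The
   inverse reconstructs x_p = y_p + max_{r < p} x_r by recursion along the
   order; unfolding the recursion at p in U2 writes x_p as the sum of y over a
   chain of U2 ending at p and starting above an element of A u U1, so (v)
   gives back the order inequalities.  Only the decomposition property of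
   (U1, U2) is needed, not the admissibility condition. *)

Section StrictOrderRecursion.
Context {d : Order.disp_t} {P : finPOrderType d}.

Definition height (p : P) : nat := #|[set r : P | (r < p)%O]|.

Lemma height_lt (q p : P) : (q < p)%O -> height q < height p.
Proof.
move=> qp; apply: proper_card; apply/properP; split.
  by apply/fintype.subsetP => r; rewrite !inE => rq; apply: lt_trans rq qp.
by exists q; rewrite !inE ?ltxx.
Qed.

Lemma height_lt_card (p : P) : height p < #|P|.
Proof.
rewrite -cardsT; apply: proper_card; apply/properP; split => //.
by exists p; rewrite !inE ?ltxx.
Qed.

Lemma lt_ind (Q : P -> Prop) :
  (forall p, (forall q, (q < p)%O -> Q q) -> Q p) -> forall p, Q p.
Proof.
move=> IH; suff K k p : height p < k -> Q p by move=> p; apply: (K (height p).+1).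
elim: k p => // k IHk p hp; apply: IH => q qp; apply: IHk.
by have := height_lt qp; lia.
Qed.

Definition max_below (h : P -> nat) (p : P) : nat := \max_(r | (r < p)%O) h r.

Lemma leq_max_below (h : P -> nat) (q p : P) : (q < p)%O -> h q <= max_below h p.
Proof. exact: (@leq_bigmax_cond P (fun r => (r < p)%O) h q). Qed.

Lemma eq_max_below (h1 h2 : P -> nat) (p : P) :
  (forall q, (q < p)%O -> h1 q = h2 q) -> max_below h1 p = max_below h2 p.
Proof. exact: eq_bigr. Qed.

Lemma max_below_attained (h : P -> nat) (p : P) :
  (exists q, (q < p)%O) -> exists2 q, (q < p)%O & max_below h p = h q.
Proof.
move=> [q qp]; have nonempty : 0 < #|[pred r | (r < p)%O]| by apply/card_gt0P; exists q.
by have [r rp E] := eq_bigmax_cond h nonempty; exists r.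
Qed.

Variable U : {set P}.

Definition increment (v : P -> nat) (p : P) : nat :=
  if p \in U then v p - max_below v p else v p.

Definition cumulative (g h : P -> nat) :=
  forall p, h p = if p \in U then g p + max_below h p else g p.

Fixpoint cumul_iter (g : P -> nat) (k : nat) (p : P) : nat :=
  if k is k'.+1 then
    (if p \in U then g p + max_below (cumul_iter g k') p else g p)
  else g p.

Definition cumul (g : P -> nat) : P -> nat := cumul_iter g #|P|.

Lemma cumul_iter_stable (g : P -> nat) k p :
  height p < k -> cumul_iter g k p = cumul_iter g k.+1 p.
Proof.
elim: k p => // k IH p hp /=; case: ifP => // _; congr (_ + _).
by apply: eq_max_below => q qp; apply: IH; have := height_lt qp; lia.
Qed.

Lemma cumulP (g : P -> nat) : cumulative g (cumul g).
Proof. by move=> p; rewrite /cumul (cumul_iter_stable g (height_lt_card p)). Qed.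

Lemma cumulative_uniq (g h1 h2 : P -> nat) :
  cumulative g h1 -> cumulative g h2 -> h1 =1 h2.
Proof.
move=> H1 H2; apply: lt_ind => p IH; rewrite H1 H2; case: ifP => // _.
by rewrite (eq_max_below IH).
Qed.

Lemma cumul_notin (g : P -> nat) p : p \notin U -> cumul g p = g p.
Proof. by move=> pU; rewrite cumulP (negbTE pU). Qed.

Lemma cumul_in (g : P -> nat) p : p \in U -> cumul g p = g p + max_below (cumul g) p.
Proof. by move=> pU; rewrite {1}cumulP pU. Qed.

Lemma increment_notin (v : P -> nat) p : p \notin U -> increment v p = v p.
Proof. by rewrite /increment => /negbTE ->. Qed.

Lemma increment_cumul (g : P -> nat) : increment (cumul g) =1 g.
Proof.
move=> p; rewrite /increment; case: ifP => pU; first by rewrite cumul_in // addnK.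
by rewrite cumul_notin ?pU.
Qed.

Lemma cumulative_increment (v : P -> nat) :
  (forall p, p \in U -> max_below v p <= v p) -> cumulative (increment v) v.
Proof.
by move=> vU p; rewrite /increment; case: ifP => pU; rewrite pU /= ?subnK ?vU.
Qed.

Lemma sum_increment_le (v : P -> nat) (b : P) (s : seq P) :
  (forall p, p \in U -> max_below v p <= v p) ->
  all (fun r => r \in U) s -> path (fun p q => (p < q)%O) b s ->
  \sum_(p <- s) increment v p + v b <= v (last b s).
Proof.
move=> vU; elim: s b => [|p s IH] b /=; first by rewrite big_nil.
move=> /andP[pU sU] /andP[bp ps]; rewrite big_cons {1}/increment pU.
have := leq_max_below v bp; have := vU p pU; have := IH p sU ps; lia.
Qed.

Lemma cumul_chain (g : P -> nat) (p : P) :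
  (forall q, q \in U -> exists r, (r < q)%O) -> p \in U ->
  exists b s, [/\ b \notin U, path (fun p q => (p < q)%O) b s,
    all (fun r => r \in U) s, last b s = p & cumul g p = \sum_(r <- s) g r + g b].
Proof.
move=> Ubelow; elim/lt_ind: p => p IH pU.
have [q qp Mq] := max_below_attained (cumul g) (Ubelow p pU).
have cumul_p : cumul g p = g p + cumul g q by rewrite cumul_in // Mq.
have [qU | qNU] := boolP (q \in U).
  have [b [s [bU bs sU ls cumul_q]]] := IH q qp qU.
  exists b, (rcons s p); split.
  - exact: bU.
  - by rewrite rcons_path bs ls qp.
  - by rewrite all_rcons pU.
  - by rewrite last_rcons.
  - by rewrite cumul_p cumul_q -cats1 big_cat big_seq1 /=; lia.
exists q, [:: p]; split => //=; rewrite ?qp ?pU //.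
by rewrite cumul_p big_seq1 cumul_notin //; lia.
Qed.

End StrictOrderRecursion.

(* [card_set_bijP] wants a pointed codomain. *)
HB.instance Definition _ d (P : finPOrderType d) (A : {set P}) :=
  isPointed.Build {ffun coordP A -> nat} [ffun=> 0%N].

Section MarkedChainOrderPolytope.
Context {d : Order.disp_t} {P : finPOrderType d}.
Variables (A U1 U2 : {set P}) (lam : P -> nat).
Hypothesis hA : marked A.
Hypothesis hU : decomposition A U1 U2.

Local Notation point := {ffun coordP A -> nat}.
Local Notation in_order_polytope := (in_CO A (~: A) finset.set0 lam).
Local Notation in_chain_order_polytope := (in_CO A U1 U2 lam).

Lemma xval_in_A (x : point) p : p \in A -> xval lam x p = lam p.
Proof. by move=> pA; rewrite /xval insubN // negbK. Qed.

Lemma xval_val (x : point) (q : coordP A) : xval lam x (val q) = x q.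
Proof. by rewrite /xval valK. Qed.

Lemma outside_A_cover p : (p \notin A) = (p \in U1) || (p \in U2).
Proof. by case: hU => _ cover; rewrite -finset.in_setU cover finset.in_setC. Qed.

Lemma U1_outside_A p : p \in U1 -> p \notin A.
Proof. by rewrite outside_A_cover => ->. Qed.

Lemma U2_outside_A p : p \in U2 -> p \notin A.
Proof. by rewrite outside_A_cover => ->; rewrite orbT. Qed.

Lemma A1_outside_U2 p : (p \in A :|: U1) = (p \notin U2).
Proof.
case: hU => disj _; rewrite finset.in_setU.
have [pU2 | pNU2] := boolP (p \in U2).
  by rewrite (disjointFl disj pU2) orbF; apply/negbTE/U2_outside_A.
have [//| pNA] := boolP (p \in A).
by move: pNA; rewrite outside_A_cover (negbTE pNU2) orbF.
Qed.

Lemma A_outside_U2 p : p \in A -> p \notin U2.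
Proof. by move=> pA; rewrite -A1_outside_U2 finset.in_setU pA. Qed.

Lemma U1_outside_U2 p : p \in U1 -> p \notin U2.
Proof. by move=> pU1; rewrite -A1_outside_U2 finset.in_setU pU1 orbT. Qed.

Lemma U2_not_minimal q : q \in U2 -> exists r, (r < q)%O.
Proof.
move=> qU2; case: (pickP (fun r => (r < q)%O)) => [r rq | none]; first by exists r.
have qA : q \in A by case: hA => /(_ q) -> // r; rewrite none.
by move: (U2_outside_A qU2); rewrite qA.
Qed.

Lemma order_point_mono (x : point) : in_order_polytope x ->
  forall q p, (q < p)%O -> (q \notin A) || (p \notin A) ->
  xval lam x q <= xval lam x p.
Proof.
case=> [Hi [Hii [Hiii _]]] q p qp.
case qA: (q \in A); case pA: (p \in A) => //= _.
- by rewrite (xval_in_A x qA) Hii // finset.in_setC pA.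
- by rewrite (xval_in_A x pA) Hi // finset.in_setC qA.
- by rewrite Hiii // finset.in_setC ?pA ?qA.
Qed.

Lemma order_point_max_below (x : point) p : in_order_polytope x ->
  p \notin A -> max_below (xval lam x) p <= xval lam x p.
Proof.
by move=> Ox pA; apply/bigmax_leqP => r rp; apply: order_point_mono; rewrite ?pA ?orbT.
Qed.

Definition to_chain (x : point) : point :=
  [ffun q => increment U2 (xval lam x) (val q)].

Definition to_order (y : point) : point :=
  [ffun q => cumul U2 (xval lam y) (val q)].

Lemma xval_to_chain (x : point) : xval lam (to_chain x) = increment U2 (xval lam x).
Proof.
apply/funext => p; have [pA | pNA] := boolP (p \in A).
  by rewrite increment_notin ?A_outside_U2 // !xval_in_A.
by rewrite -[p]/(val (exist _ p pNA : coordP A)) xval_val ffunE.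
Qed.

Lemma xval_to_order (y : point) : xval lam (to_order y) = cumul U2 (xval lam y).
Proof.
apply/funext => p; have [pA | pNA] := boolP (p \in A).
  by rewrite cumul_notin ?A_outside_U2 // !xval_in_A.
by rewrite -[p]/(val (exist _ p pNA : coordP A)) xval_val ffunE.
Qed.

Lemma to_chain_in_CO (x : point) :
  in_order_polytope x -> in_chain_order_polytope (to_chain x).
Proof.
move=> Ox; have [Hi [Hii [Hiii _]]] := Ox; rewrite /in_CO xval_to_chain.
have vU2 p : p \in U2 -> max_below (xval lam x) p <= xval lam x p.
  by move=> pU2; apply: order_point_max_below (U2_outside_A pU2).
have inCA p : p \in U1 -> p \in ~: A by rewrite finset.in_setC => /U1_outside_A.
split; [|split; [|split; [|split]]].
- move=> p a pU1 aA pa.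
  by rewrite increment_notin ?U1_outside_U2 // Hi ?inCA.
- move=> q b qU1 bA bq.
  by rewrite increment_notin ?U1_outside_U2 // Hii ?inCA.
- move=> p q pU1 qU1 pq.
  by rewrite !increment_notin ?U1_outside_U2 ?Hiii ?inCA.
- move=> a b [//|p s] _ aA1 bA1 sU2 ps bp la.
  have lU2 : last p s \in U2 by move/allP: sU2; apply; apply: mem_last.
  rewrite !increment_notin -?A1_outside_U2 //.
  apply: leq_trans (sum_increment_le vU2 sU2 _) _; first by rewrite /= bp.
  by apply: (order_point_mono Ox la); rewrite /= (U2_outside_A lU2).
- move=> q s qU1 sU2 ss [lq | ->]; last by rewrite big_nil.
  case: s sU2 ss lq => [|p s] sU2; first by rewrite big_nil.
  have lU2 : last p s \in U2 by move/allP: sU2; apply; apply: mem_last.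
  move: sU2 => /= /andP[pU2 sU2] ps lq.
  have := sum_increment_le vU2 sU2 ps.
  have := order_point_mono Ox lq; rewrite U2_outside_A // => /(_ isT).
  have : increment U2 (xval lam x) p <= xval lam x p.
    by rewrite /increment pU2 leq_subr.
  by rewrite big_cons (increment_notin _ (U1_outside_U2 qU1)); lia.
Qed.

Lemma cumul_U2_le_A1 (y : point) p a : in_chain_order_polytope y ->
  p \in U2 -> a \in A :|: U1 -> (p < a)%O -> cumul U2 (xval lam y) p <= xval lam y a.
Proof.
move=> [_ [_ [_ [Hv _]]]] pU2 aA1 pa.
have [b [s [bNU2 bs sU2 ls ->]]] := cumul_chain (xval lam y) U2_not_minimal pU2.
case: s bs sU2 ls => [_ _ /= bp | r s]; first by move: bNU2; rewrite bp pU2.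
move=> /= /andP[br rs] sU2 ls; apply: Hv => //; first by rewrite A1_outside_U2.
by rewrite /= ls.
Qed.

Lemma to_order_in_CO (y : point) :
  in_chain_order_polytope y -> in_order_polytope (to_order y).
Proof.
move=> Cy; have [Hi [Hii [Hiii _]]] := Cy; rewrite /in_CO xval_to_order.
set w := cumul U2 (xval lam y).
have w_U1 p : p \in U1 -> w p = xval lam y p.
  by move=> /U1_outside_U2; apply: cumul_notin.
have w_below p q : p \in U2 -> (q < p)%O -> w q <= w p.
  move=> pU2 qp; rewrite {2}/w cumul_in // -/w.
  exact: leq_trans (leq_max_below _ qp) (leq_addl _ _).
have inA1 p : p \in U1 -> p \in A :|: U1 by rewrite finset.in_setU => ->; rewrite orbT.
split; [|split; [|split; [|split]]].
- move=> p a pNA aA pa.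
  move: pNA; rewrite finset.in_setC outside_A_cover => /orP[pU1 | pU2].
    by rewrite w_U1 // Hi.
  by rewrite -(xval_in_A y aA); apply: cumul_U2_le_A1; rewrite // finset.in_setU aA.
- move=> q b qNA bA bq.
  move: qNA; rewrite finset.in_setC outside_A_cover => /orP[qU1 | qU2].
    by rewrite w_U1 // Hii.
  by rewrite -(xval_in_A y bA) -(cumul_notin _ (A_outside_U2 bA)) w_below.
- move=> p q pNA qNA pq.
  move: qNA; rewrite finset.in_setC outside_A_cover => /orP[qU1 | qU2]; last first.
    exact: w_below.
  rewrite (w_U1 q qU1).
  move: pNA; rewrite finset.in_setC outside_A_cover => /orP[pU1 | pU2].
    by rewrite w_U1 // Hiii.
  exact: cumul_U2_le_A1 (inA1 _ qU1) pq.
- by move=> a b [//|r s] _ _ _ /andP[]; rewrite finset.in_set0.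
- by move=> q [|r s] _ /=; [rewrite big_nil | rewrite finset.in_set0].
Qed.

Lemma to_chainK (x : point) : in_order_polytope x -> to_order (to_chain x) = x.
Proof.
move=> Ox; apply/ffunP => q; rewrite ffunE xval_to_chain -[x q]xval_val.
have vU2 : cumulative U2 (increment U2 (xval lam x)) (xval lam x).
  apply: cumulative_increment => p pU2.
  exact: order_point_max_below (U2_outside_A pU2).
exact: cumulative_uniq (cumulP _ _) vU2 _.
Qed.

Lemma to_orderK (y : point) : to_chain (to_order y) = y.
Proof. by apply/ffunP => q; rewrite ffunE xval_to_order increment_cumul xval_val. Qed.

Lemma card_chain_order_lattice_points :
  (S_CO A U1 U2 lam #= S_CO A (~: A) finset.set0 lam)%card.
Proof.
apply/card_set_bijP; exists to_order; split.
- exact: to_order_in_CO.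
- by move=> y1 y2 _ _ eq_y; rewrite -(to_orderK y1) -(to_orderK y2) eq_y.
- by move=> x Ox; exists (to_chain x); [apply: to_chain_in_CO | apply: to_chainK].
Qed.

End MarkedChainOrderPolytope.

Local Open Scope classical_set_scope.
Local Open Scope card_scope.

Theorem theorem3p1 (d : Order.disp_t) (P : finPOrderType d)
  (A : {set P}) (lam : P -> nat) (hA : marked A)
  (U1 U2 : {set P}) (hU : admissible A U1 U2) (n : nat) :
  S_CO A U1 U2 (fun a => n * lam a)%N #= S_CO A (~: A) (finset.set0 : {set P}) (fun a => n * lam a)%N.
Proof. exact: card_chain_order_lattice_points hA hU.1. Qed.
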